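(* The DS matching and pricing scheme described in the context is budget balancing: $\sum_{d\in\mathcal{D}^*}q_d=\sum_{r\in\mathcal{R}^*}q_r$.
   Context: One decision epoch with finite sets $\mathcal{D}$ (drivers) and $\mathcal{R}$ (riders). Rider $r$ requests a trip of shortest-route length $h_r$ with destination $t_r$; $\tau_{dr}\ge0$ is the pick-up distance from driver $d$ to rider $r$, $\tau_d^{\min}=\min_{r}\tau_{dr}$, $\tau_r^{\min}=\min_d\tau_{dr}$. Public constants $\alpha,\beta>0$, and $f(t_r)$ is a given opportunity cost depending on the destination. Driver $d$ reports a bid $b_d$ and rider $r$ a bid $\delta_r$. For a potential match $(d,r)$ the valuations are $P_d=\alpha h_r+b_d(\tau_{dr}-\tau_d^{\min})+f(t_r)$ and $P_r=\beta h_r-\delta_r(\tau_{dr}-\tau_r^{\min})$, and the social welfare is $\sigma_{dr}=P_r-P_d$. Each potential match has a sensing gain $\zeta_{dr}\ge0$ not depending on bids. DS matching problem: maximize $\sum_{r,d}\zeta_{dr}x_{dr}$ subject to $\sum_r x_{dr}\le1$ $\forall d$, $\sum_d x_{dr}\le 1$ $\forall r$, $\sum_{r,d}\sigma_{dr}x_{dr}\ge0$, $x_{dr}\in\{0,1\}$; let $x^*$ be an optimal solution with value $U^*$, $\mathcal{D}^*,\mathcal{R}^*$ the sets of matched drivers and riders, and $V=\sum_{r,d}\sigma_{dr}x^*_{dr}$. For $d\in\mathcal{D}^*$ let $U^*_{d-}$ be the optimal value of the same problem with driver $d$ removed and $\Delta U_d=U^*-U^*_{d-}$; analogously $\Delta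 U_r=U^*-U^*_{r-}$ for $r\in\mathcal{R}^*$. Shares: $\lambda_d=\Delta U_d/(\sum_{d'\in\mathcal{D}^*}\Delta U_{d'}+\sum_{r'\in\mathcal{R}^*}\Delta U_{r'})$ and $\lambda_r=\Delta U_r/(\text{same denominator})$ (the denominator is taken to be nonzero so the shares are defined). Bonuses $\rho_d=V\lambda_d$, $\rho_r=V\lambda_r$. For a matched pair $(d,r)$ (with $P_d,P_r$ evaluated at that pair), the platform pays driver $d$ the amount $q_d=P_d+\rho_d$ and charges rider $r$ the amount $q_r=P_r-\rho_r$. *)

From HB Require Import structures.
From mathcomp Require Import all_boot all_order all_algebra.
Set Implicit Arguments. Unset Strict Implicit. Unset Printing Implicit Defensive.
Import Order.TTheory GRing.Theory Num.Theory.
Local Open Scope ring_scope.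

(* K : the real numbers (any real field), Dr : drivers, Rd : riders,
   T : destinations. *)
Record market (K : realFieldType) (Dr Rd : finType) (T : Type) := Market {
  alpha : K;
  beta  : K;
  h     : Rd -> K;      (* h_r : shortest-route trip length of rider r *)
  dest  : Rd -> T;
  fcost : T -> K;       (* f : opportunity cost of a destination *)
  tau   : Dr -> Rd -> K;(* tau_{dr} : pick-up distance *)
  bidD  : Dr -> K;
  bidR  : Rd -> K;
  zeta  : Dr -> Rd -> K (* zeta_{dr} : sensing gain *)
}.

Section DS.
Variables (K : realFieldType) (Dr Rd : finType) (T : Type) (M : market K Dr Rd T).

(* tau_d^min = min_r tau_{dr}; the fold is seeded with tau_{dr} for the pair
   at hand, which is itself in the range, so this is exactly the minimum. *)
Definition tau_min_d (d : Dr) (r : Rd) : K :=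
  \big[Num.min/tau M d r]_(r' : Rd) tau M d r'.
Definition tau_min_r (d : Dr) (r : Rd) : K :=
  \big[Num.min/tau M d r]_(d' : Dr) tau M d' r.

Definition Pd (d : Dr) (r : Rd) : K :=
  alpha M * h M r + bidD M d * (tau M d r - tau_min_d d r) + fcost M (dest M r).
Definition Pr (d : Dr) (r : Rd) : K :=
  beta M * h M r - bidR M r * (tau M d r - tau_min_r d r).
Definition sigma (d : Dr) (r : Rd) : K := Pr d r - Pd d r.

Definition matching := {ffun Dr * Rd -> bool}.

Definition welfare (x : matching) : K :=
  \sum_(p : Dr * Rd) (x p)%:R * sigma p.1 p.2.
Definition gain (x : matching) : K :=
  \sum_(p : Dr * Rd) (x p)%:R * zeta M p.1 p.2.

Definition feasible (x : matching) : bool :=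
  [forall d : Dr, #|[pred r : Rd | x (d, r)]| <= 1]%N &&
  [forall r : Rd, #|[pred d : Dr | x (d, r)]| <= 1]%N &&
  (0 <= welfare x).

Definition optimal (x : matching) : Prop :=
  feasible x /\ forall y : matching, feasible y -> gain y <= gain x.

(* The feasible set always contains the empty matching (value 0) and the
   gains zeta are nonnegative, so seeding the max with 0 is harmless. *)
Definition opt_value (P : pred matching) : K :=
  \big[Num.max/0]_(x : matching | feasible x && P x) gain x.

Definition U_minus_d (d : Dr) : K :=
  opt_value [pred x : matching | [forall r : Rd, ~~ x (d, r)]].
Definition U_minus_r (r : Rd) : K :=
  opt_value [pred x : matching | [forall d : Dr, ~~ x (d, r)]].

Variable xs : matching.

Definition Ustar : K := gain xs.
Definition V : K := welfare xs.
Definition Dstar : {set Dr} := [set d | [exists r, xs (d, r)]].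
Definition Rstar : {set Rd} := [set r | [exists d, xs (d, r)]].

Definition dU_d (d : Dr) : K := Ustar - U_minus_d d.
Definition dU_r (r : Rd) : K := Ustar - U_minus_r r.

Definition share_den : K :=
  \sum_(d in Dstar) dU_d d + \sum_(r in Rstar) dU_r r.

Definition lambda_d (d : Dr) : K := dU_d d / share_den.
Definition lambda_r (r : Rd) : K := dU_r r / share_den.

Definition rho_d (d : Dr) : K := V * lambda_d d.
Definition rho_r (r : Rd) : K := V * lambda_r r.

Definition q_d (d : Dr) : K :=
  if [pick r | xs (d, r)] is Some r then Pd d r + rho_d d else 0.
Definition q_r (r : Rd) : K :=
  if [pick d | xs (d, r)] is Some d then Pr d r - rho_r r else 0.

End DS.

From HB Require Import structures.
From mathcomp Require Import all_boot all_order all_algebra.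
From mathcomp Require Import lra.
Set Implicit Arguments.
Unset Strict Implicit.
Unset Printing Implicit Defensive.
Import Order.TTheory GRing.Theory Num.Theory.
Local Open Scope ring_scope.

(* Budget balance is pure accounting.  Summing the payments q_d and charges
   q_r over the matched agents gives the total driver and rider valuations of
   the matched pairs, whose difference is V, shifted by the bonuses; the
   bonuses split V according to the shares lambda, which add up to 1. *)

Section MatchedSums.
Variables (K : pzSemiRingType) (I J : finType) (x : I -> J -> bool).

Lemma sum_matched_rows (F : I -> J -> K) :
  \sum_i \sum_j (x i j)%:R * F i j =
  \sum_(i | [exists j, x i j]) \sum_j (x i j)%:R * F i j.
Proof.
rewrite (bigID (fun i => [exists j, x i j])) /= [X in _ + X]big1 ?addr0 //.
move=> i /existsPn x_i0; apply: big1 => j _.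
by rewrite (negbTE (x_i0 j)) mul0r.
Qed.

End MatchedSums.

Section UniqueMatch.
Variables (J : finType) (a : pred J) (j0 : J).
Hypotheses (a_le1 : (#|a| <= 1)%N) (a_j0 : a j0).

Lemma unique_match_eq j : a j -> j = j0.
Proof. by move=> a_j; apply/esym/(card_le1_eqP a_le1). Qed.

Lemma pick_unique_match : [pick j | a j] = Some j0.
Proof. by case: pickP => [j /unique_match_eq -> // | /(_ j0)]; rewrite a_j0. Qed.

Lemma sum_unique_match (K : pzSemiRingType) (F : J -> K) :
  \sum_j (a j)%:R * F j = F j0.
Proof.
rewrite (bigD1 j0) //= a_j0 mul1r big1 ?addr0 // => j j_neq0.
have [a_j | _] := boolP (a j); last by rewrite mul0r.
by rewrite (unique_match_eq a_j) eqxx in j_neq0.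
Qed.

End UniqueMatch.

Section BudgetBalance.
Variables (K : realFieldType) (Dr Rd : finType) (T : Type).
Variables (M : market K Dr Rd T) (xs : matching Dr Rd).

Let matched_total (F : Dr -> Rd -> K) : K :=
  \sum_d \sum_r (xs (d, r))%:R * F d r.

Lemma welfare_matched : V M xs = matched_total (Pr M) - matched_total (Pd M).
Proof.
rewrite /V /welfare (eq_bigr (fun p => (xs (p.1, p.2))%:R * sigma M p.1 p.2));
  last by case.
rewrite -(pair_bigA _ (fun d r => (xs (d, r))%:R * sigma M d r)).
rewrite /matched_total -sumrB; apply: eq_bigr => d _.
by rewrite -sumrB; apply: eq_bigr => r _; rewrite -mulrBr.
Qed.

Lemma sum_q_d : (forall d, #|[pred r | xs (d, r)]| <= 1)%N ->
  \sum_(d in Dstar xs) q_d M xs d =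
  matched_total (Pd M) + \sum_(d in Dstar xs) rho_d M xs d.
Proof.
move=> row_le1; rewrite /matched_total (sum_matched_rows (fun d r => xs (d, r))).
rewrite [X in _ + X](eq_bigl (fun d => [exists r, xs (d, r)])) => [|d];
  last by rewrite inE.
rewrite -big_split; apply: eq_big => [d | d]; first by rewrite inE.
rewrite inE => /existsP[r x_dr].
by rewrite /q_d (pick_unique_match (row_le1 d) x_dr)
           (sum_unique_match (row_le1 d) x_dr).
Qed.

Lemma sum_q_r : (forall r, #|[pred d | xs (d, r)]| <= 1)%N ->
  \sum_(r in Rstar xs) q_r M xs r =
  matched_total (Pr M) - \sum_(r in Rstar xs) rho_r M xs r.
Proof.
move=> col_le1; rewrite /matched_total exchange_big /=.
rewrite (sum_matched_rows (fun r d => xs (d, r))).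
rewrite [X in _ - X](eq_bigl (fun r => [exists d, xs (d, r)])) => [|r];
  last by rewrite inE.
rewrite -sumrB; apply: eq_big => [r | r]; first by rewrite inE.
rewrite inE => /existsP[d x_dr].
by rewrite /q_r (pick_unique_match (col_le1 r) x_dr)
           (sum_unique_match (col_le1 r) x_dr).
Qed.

Lemma sum_lambda : share_den M xs != 0 ->
  \sum_(d in Dstar xs) lambda_d M xs d + \sum_(r in Rstar xs) lambda_r M xs r = 1.
Proof. by move=> den_neq0; rewrite -!mulr_suml -mulrDl divff. Qed.

Lemma sum_rho : share_den M xs != 0 ->
  \sum_(d in Dstar xs) rho_d M xs d + \sum_(r in Rstar xs) rho_r M xs r = V M xs.
Proof. by move=> den_neq0; rewrite -!mulr_sumr -mulrDr sum_lambda ?mulr1. Qed.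

End BudgetBalance.

Theorem proposition2 (K : realFieldType) (Dr Rd : finType) (T : Type)
    (M : market K Dr Rd T) (xs : matching Dr Rd) :
  0 < alpha M -> 0 < beta M ->
  (forall d r, 0 <= tau M d r) ->
  (forall d r, 0 <= zeta M d r) ->
  optimal M xs ->
  share_den M xs != 0 ->
  \sum_(d in Dstar xs) q_d M xs d = \sum_(r in Rstar xs) q_r M xs r.
Proof.
move=> _ _ _ _ [/andP[/andP[/forallP row_le1 /forallP col_le1] _] _] den_neq0.
have := sum_rho den_neq0; rewrite welfare_matched.
rewrite (sum_q_d M row_le1) (sum_q_r M col_le1).
lra.
Qed.
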